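(* Let $q$ be a prime power and let $1 \le h \le T$ be integers. Let $\mathbf{G}$ be a random $h\times h$ matrix over $\mathbb{F}_q$ with an arbitrary distribution, and let $p(r) = \Pr[h - \operatorname{rank}\mathbf{G} = r]$, $r = 0,\dots,h$, be its rank deficiency distribution. Let $U \in \mathcal{P}(\mathbb{F}_q^T,h)$, and let $\mathbf{X}$ be an $h\times T$ matrix over $\mathbb{F}_q$ chosen uniformly at random from the set of all ordered bases of $U$ (i.e., all $h\times T$ matrices whose rows span $U$; there are $\prod_{i=1}^h (q^h - q^{i-1})$ of them), independently of $\mathbf{G}$. Let $\mathbf{Y} = \mathbf{G}\mathbf{X}$. Then for every subspace $V$ of $\mathbb{F}_q^T$ with $\dim V \le h$, $$\Pr\big[\langle \mathbf{Y}\rangle = V\big] = \begin{cases} \dfrac{p(h-\dim V)}{\binom{h}{\dim V}_q}, & \text{if } V \subseteq U,\\[2mm] 0, & \text{otherwise.}\end{cases}$$ In particular, this transition probability depends only on $p$, $h$, $\dim V$, and whether $V\subseteq U$, and not otherwise on the distribution of $\mathbf{G}$.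
   Context: $\mathbb{F}_q$ is the finite field with $q$ elements. For a matrix $M$ over $\mathbb{F}_q$, $\langle M\rangle$ denotes the subspace spanned by its rows. $\mathcal{P}(\mathbb{F}_q^T,k)$ denotes the Grassmannian, the set of all $k$-dimensional subspaces of $\mathbb{F}_q^T$. The $q$-ary Gaussian coefficient is $\binom{n}{\ell}_q = \prod_{i=0}^{\ell-1}\frac{q^{n-i}-1}{q^{\ell-i}-1}$, the number of $\ell$-dimensional subspaces of an $n$-dimensional vector space over $\mathbb{F}_q$ (with $\binom{n}{0}_q = 1$). *)

From HB Require Import structures.
From mathcomp Require Import all_boot all_order all_algebra.
Set Implicit Arguments. Unset Strict Implicit. Unset Printing Implicit Defensive.
Import Order.TTheory GRing.Theory Num.Theory.
Local Open Scope ring_scope.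

Definition gauss_binom (R : fieldType) (q n l : nat) : R :=
  \prod_(i < l) ((((q ^ (n - i))%N)%:R - 1) / (((q ^ (l - i))%N)%:R - 1)).

Definition bases_of (F : finFieldType) (h T : nat) (U : 'M[F]_T) :
  {set 'M[F]_(h, T)} := [set X : 'M[F]_(h, T) | (X == U)%MS].

Definition rank_def_dist (R : realFieldType) (F : finFieldType) (h : nat)
  (mu : 'M[F]_h -> R) (r : nat) : R :=
  \sum_(G : 'M[F]_h | (h - \rank G)%N == r) mu G.

Definition prob_span_eq (R : realFieldType) (F : finFieldType) (h T : nat)
  (mu : 'M[F]_h -> R) (U V : 'M[F]_T) : R :=
  \sum_(G : 'M[F]_h) \sum_(X in bases_of h U)
     mu G * (#|bases_of h U|%:R)^-1 * ((G *m X == V)%MS)%:R.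

From HB Require Import structures.
From mathcomp Require Import all_boot all_order all_algebra.
Set Implicit Arguments. Unset Strict Implicit. Unset Printing Implicit Defensive.
Import Order.TTheory GRing.Theory Num.Theory.

(* Gaussian elimination writes G = L *m pid_mx k *m R with L, R invertible and
   k = rank G. Left multiplication by L does not change row spaces and X |-> R X
   permutes the bases of U, so counting the bases X of U with <G X> = V amounts
   to counting the bases of U whose first k rows span V. There are none unless
   V <= U and dim V = k, and otherwise they are an ordered basis of V followed
   by an extension to a basis of U. Their number depends on G only through its
   rank, and dividing it by the number of all bases of U (the case k = 0)
   gives 1 / [h choose k]_q. *)

Lemma sum_nat_bool_card (I : finType) (A : {pred I}) :
  \sum_(i : I) ((i \in A) : nat) = #|A|.
Proof.
rewrite -sum1_card [RHS]big_mkcond /=; apply: eq_bigr => i _.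
by case: (i \in A).
Qed.

(* The number of ordered bases of an [h]-dimensional space over a field with
   [q] elements whose first [k] vectors span a given [k]-dimensional
   subspace: an ordered basis of that subspace, then [h - k] vectors each
   avoiding the span of the previous ones. *)
Definition nbases_prefix (q h k : nat) : nat :=
  (\prod_(i < k) (q ^ k - q ^ i) * \prod_(i < h - k) (q ^ h - q ^ (k + i)))%N.

Section Counting.
Variables (F : finFieldType) (T : nat).
Local Notation q := #|F|.

Lemma sum_col_mx (a b : nat) (f : 'M[F]_(a + b, T) -> nat) :
  \sum_(X : 'M[F]_(a + b, T)) f X =
  \sum_(A : 'M[F]_(a, T)) \sum_(B : 'M[F]_(b, T)) f (col_mx A B).
Proof.
rewrite pair_big /=.
rewrite (reindex (fun p : 'M[F]_(a, T) * 'M[F]_(b, T) => col_mx p.1 p.2)) //=.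
exists (fun X => (usubmx X, dsubmx X)) => [[A B] _ | X _] /=.
  by rewrite col_mxKu col_mxKd.
by rewrite vsubmxK.
Qed.

Lemma count_rows_submx (r : nat) (M : 'M[F]_(r, T)) :
  \sum_(v : 'rV[F]_T) ((v <= M)%MS : nat) = (q ^ \rank M)%N.
Proof.
rewrite (sum_nat_bool_card [pred v : 'rV[F]_T | (v <= M)%MS]).
have -> : #|[pred v : 'rV[F]_T | (v <= M)%MS]| =
          #|[set (w *m row_base M)%R | w in [set: 'rV[F]_(\rank M)]]|.
  apply: eq_card => v; rewrite !inE; apply/idP/imsetP.
    by rewrite -(eq_row_base M) => /submxP[w ->]; exists w; rewrite ?inE.
  by case=> w _ ->; rewrite (submx_trans (submxMl _ _)) ?eq_row_base.
rewrite card_imset; last exact: row_free_inj (row_base_free M).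
by rewrite cardsT card_mx mul1n.
Qed.

Lemma count_rows_submx_notin (r : nat) (M : 'M[F]_(r, T)) (W : 'M[F]_T) :
  (M <= W)%MS ->
  \sum_(v : 'rV[F]_T) (((v <= W)%MS && ~~ (v <= M)%MS) : nat)
   = (q ^ \rank W - q ^ \rank M)%N.
Proof.
move=> sMW; rewrite -!count_rows_submx.
have -> : \sum_(v : 'rV[F]_T) ((v <= W)%MS : nat) =
  \sum_(v : 'rV[F]_T) ((((v <= W)%MS && ~~ (v <= M)%MS) : nat) + (v <= M)%MS).
  apply: eq_bigr => v _; case vM: (v <= M)%MS; last by rewrite andbT addn0.
  by rewrite (submx_trans vM sMW).
by rewrite big_split addnK.
Qed.

Lemma mxrank_adds_row (r : nat) (M : 'M[F]_(r, T)) (v : 'rV[F]_T) :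
  \rank (M + v)%MS = (\rank M + ~~ (v <= M)%MS)%N.
Proof.
have le1 : (\rank (M + v)%MS <= \rank M + 1)%N.
  by rewrite (leq_trans (mxrank_adds_leqif M v)) // leq_add2l rank_leq_row.
have [sup eqc] := mxrank_leqif_sup (addsmxSl M v).
case vM: (v <= M)%MS => /=.
  by apply/eqP; rewrite addn0 eq_sym eqc addsmx_sub submx_refl vM.
by apply/eqP; rewrite eqn_leq le1 addn1 ltn_neqAle sup eqc addsmx_sub submx_refl vM.
Qed.

(* The i-th new row must avoid the span of M and the previous rows, which has
   rank [rank M + i]. *)
Lemma count_independent_extensions (m r : nat) (M : 'M[F]_(r, T))
    (W : 'M[F]_T) : (M <= W)%MS ->
  \sum_(N : 'M[F]_(m, T))
     (((N <= W)%MS && (\rank (M + N)%MS == \rank M + m)%N) : nat)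
  = \prod_(i < m) (q ^ \rank W - q ^ (\rank M + i))%N.
Proof.
elim: m r M => [|m IHm] r M sMW.
  rewrite big_ord0 (eq_bigr (fun _ => 1%N)) ?sum1_card ?card_mx // => N _.
  by rewrite [N]flatmx0 sub0mx addn0 addsmx0 eqxx.
rewrite (sum_col_mx (a := 1)) big_ord_recl /= addn0.
rewrite -(count_rows_submx_notin sMW) big_distrl /=; apply: eq_bigr => v _.
have rank_adds_col B : \rank (M + col_mx v B)%MS = \rank (M + v + B)%MS.
  rewrite -addsmxA; apply/eqmx_rank/eqmxP.
  exact: adds_eqmx (eqmx_refl _) (eqmx_sym (addsmxE v B)).
under eq_bigr => B _ do rewrite rank_adds_col (col_mx_sub v B W).
case vW: (v <= W)%MS; last by rewrite big1.
case vM: (v <= M)%MS => /=.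
  rewrite mul0n big1 // => B _; apply/eqP; rewrite eqb0 negb_and; apply/orP.
  right; rewrite neq_ltn (leq_ltn_trans (mxrank_adds_leqif _ _)) //.
  by rewrite mxrank_adds_row vM addn0 addnS ltnS leq_add2l rank_leq_row.
have sMvW : (M + v <= W)%MS by rewrite addsmx_sub sMW vW.
have rank_Mv : \rank (M + v)%MS = (\rank M).+1 by rewrite mxrank_adds_row vM addn1.
rewrite mul1n (eq_bigr (fun i : 'I_m => q ^ \rank W - q ^ (\rank (M + v)%MS + i)))%N;
  last by move=> i _; rewrite rank_Mv /bump /= add1n addSnnS.
rewrite -(IHm _ _ sMvW); apply: eq_bigr => B _.
by rewrite rank_Mv addSnnS.
Qed.

Lemma eqmx_sub_rank (a b : nat) (X : 'M[F]_(a, T)) (U : 'M[F]_(b, T)) :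
  (X == U)%MS = (X <= U)%MS && (\rank X == \rank U).
Proof.
case sXU: (X <= U)%MS => //=.
by have [_ ->] := mxrank_leqif_eq sXU; rewrite sXU.
Qed.

Lemma count_bases_pid_block (k m : nat) (U V : 'M[F]_T) :
  \rank U = (k + m)%N -> \rank V = k -> (V <= U)%MS ->
  \sum_(X : 'M[F]_(k + m, T))
     (((X == U)%MS && ((pid_mx k : 'M_(k + m)) *m X == V)%MS)%R : nat)
  = nbases_prefix q (k + m) k.
Proof.
move=> rU rV sVU; rewrite /nbases_prefix addKn sum_col_mx.
have span_pid_col (A : 'M[F]_(k, T)) (B : 'M[F]_(m, T)) :
  ((pid_mx k : 'M_(k + m)) *m col_mx A B :=: A)%MS%R.
  rewrite pid_mx_block mul_block_col !mul1mx !mul0mx !addr0.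
  exact: eqmx_trans (eqmx_sym (addsmxE A 0)) (addsmx0 _ A).
have count_A (A : 'M[F]_(k, T)) :
  \sum_(B : 'M[F]_(m, T))
     (((col_mx A B == U)%MS && ((pid_mx k : 'M_(k + m)) *m col_mx A B == V)%MS)%R : nat)
  = ((A == V)%MS * \prod_(i < m) (q ^ (k + m) - q ^ (k + i)))%N.
  under eq_bigr => B _ do rewrite !span_pid_col eqmx_sub_rank col_mx_sub -addsmxE rU.
  case AV: (A == V)%MS; last by rewrite big1 // => B _; rewrite andbF.
  have rA : \rank A = k by rewrite -(eqmx_rank AV) in rV.
  have sAU : (A <= U)%MS by case/andP: AV => AV _; apply: submx_trans AV sVU.
  rewrite mul1n -rU -[in RHS]rA -(count_independent_extensions m sAU).
  by apply: eq_bigr => B _; rewrite sAU andbT rA rU.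
rewrite (eq_bigr _ (fun A _ => count_A A)) -big_distrl /=; congr (_ * _)%N.
have := count_independent_extensions k (sub0mx 0 V); rewrite mxrank0 rV => <-.
by apply: eq_bigr => A _; rewrite adds0mx eqmx_sub_rank rV.
Qed.

Lemma count_bases_pid_mx (h k : nat) (U V : 'M[F]_T) :
  (k <= h)%N -> \rank U = h ->
  \sum_(X : 'M[F]_(h, T)) (((X == U)%MS && ((pid_mx k : 'M_h) *m X == V)%MS)%R : nat)
  = if (V <= U)%MS && (\rank V == k) then nbases_prefix q h k else 0%N.
Proof.
move=> le_kh rU; case sVU: (V <= U)%MS => /=; last first.
  rewrite big1 // => X _; apply/eqP; rewrite eqb0; apply/negP.
  case/andP=> /andP[sXU _] /andP[_ sVpX].
  by rewrite (submx_trans sVpX (submx_trans (submxMl _ _) sXU)) in sVU.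
have [rV | ne_rV_k] := eqVneq (\rank V) k; last first.
  rewrite big1 // => X _; apply/eqP; rewrite eqb0; apply/negP.
  case/andP=> eqXU eqpXV; case/eqP: ne_rV_k.
  have freeX : row_free X by rewrite /row_free (eqmx_rank eqXU) rU.
  by rewrite -(eqmx_rank eqpXV) mxrankMfree // rank_pid_mx.
move: (h - k)%N (subnKC le_kh) rU => m <- rU.
exact: (count_bases_pid_block rU rV sVU).
Qed.

Lemma eqmx_mul_ebase (h : nat) (G : 'M[F]_h) (X : 'M[F]_(h, T)) :
  (G *m X :=: (pid_mx (\rank G) : 'M_h) *m (row_ebase G *m X))%MS%R.
Proof.
rewrite -{1}(mulmx_ebase G) -!mulmxA; apply: eqmxMfull.
by rewrite row_full_unit col_ebase_unit.
Qed.

Lemma count_bases_mulmx (h : nat) (G : 'M[F]_h) (U V : 'M[F]_T) :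
  \rank U = h ->
  \sum_(X : 'M[F]_(h, T)) (((X == U)%MS && (G *m X == V)%MS)%R : nat)
  = if (V <= U)%MS && (\rank V == \rank G) then nbases_prefix q h (\rank G)
    else 0%N.
Proof.
move=> rU; rewrite -(count_bases_pid_mx V (rank_leq_row G) rU).
have unitR := row_ebase_unit G.
rewrite (reindex_inj (can_inj (mulKVmx unitR))) /=; apply: eq_bigr => X _.
have eqRX : (invmx (row_ebase G) *m X :=: X)%MS%R.
  by apply: eqmxMfull; rewrite row_full_unit unitmx_inv.
by rewrite !(eqmx_mul_ebase G) mulKVmx // !eqRX.
Qed.

Lemma card_bases_of (h : nat) (U : 'M[F]_T) :
  \rank U = h -> #|bases_of h U| = nbases_prefix q h 0.
Proof.
move=> rU; rewrite -sum_nat_bool_card.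
have := count_bases_pid_mx 0 (leq0n h) rU; rewrite sub0mx mxrank0 /= => <-.
by apply: eq_bigr => X _; rewrite inE pid_mx_0 mul0mx !sub0mx !andbT.
Qed.

End Counting.

Local Open Scope ring_scope.

Lemma nbases_prefix_ratio (R : numFieldType) (q h k : nat) :
  (1 < q)%N -> (k <= h)%N ->
  (nbases_prefix q h k)%:R / (nbases_prefix q h 0)%:R
  = (gauss_binom R q h k)^-1 :> R.
Proof.
move=> q_gt1 le_kh.
have q_gt0 : (0 < q)%N by apply: ltnW.
have nbases0_split : nbases_prefix q h 0 =
    (\prod_(i < k) (q ^ h - q ^ i) * \prod_(i < h - k) (q ^ h - q ^ (k + i)))%N.
  rewrite /nbases_prefix big_ord0 mul1n subn0.
  rewrite -(big_mkord xpredT (fun i => q ^ h - q ^ (0 + i)))%N.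
  rewrite (big_cat_nat (leq0n k) le_kh) /= big_mkord; congr (_ * _)%N.
  rewrite -{1}(add0n k) big_addn big_mkord; apply: eq_bigr => i _.
  by rewrite add0n addnC.
rewrite nbases0_split /nbases_prefix !natrM invfM mulrACA divff ?mulr1; last first.
  rewrite pnatr_eq0 -lt0n prodn_gt0 // => i.
  by rewrite subn_gt0 ltn_exp2l // -ltn_subRL.
rewrite /gauss_binom -invf_div; congr (_^-1).
rewrite !natr_prod -prodf_div; apply: eq_bigr => i _.
have factor_q (n : nat) : (i <= n)%N -> (q ^ n - q ^ i = q ^ i * (q ^ (n - i) - 1))%N.
  by move=> le_in; rewrite mulnBr muln1 -expnD subnKC.
have le_ik : (i <= k)%N := ltnW (ltn_ord i).
rewrite (factor_q h (leq_trans le_ik le_kh)) (factor_q k le_ik).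
rewrite !natrM !natrB ?expn_gt0 ?q_gt0 // invfM mulrACA divff ?mul1r //.
by rewrite pnatr_eq0 -lt0n expn_gt0 q_gt0.
Qed.

Theorem theorem3 (R : realFieldType) (F : finFieldType) (h T : nat)
  (hh : (1 <= h)%N) (hT : (h <= T)%N)
  (mu : 'M[F]_h -> R)
  (mu_ge0 : forall G, 0 <= mu G) (mu_sum1 : \sum_(G : 'M[F]_h) mu G = 1)
  (U : 'M[F]_T) (rkU : \rank U = h)
  (V : 'M[F]_T) (rkV : (\rank V <= h)%N) :
  prob_span_eq mu U V =
    (if (V <= U)%MS
     then rank_def_dist mu (h - \rank V) / gauss_binom R #|F| h (\rank V)
     else 0).
Proof.
(* The identity holds for arbitrary weights [mu]; only [rkU] is needed. *)
have prob_given_G (G : 'M[F]_h) :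
    \sum_(X in bases_of h U)
      mu G * (#|bases_of h U|%:R)^-1 * ((G *m X == V)%MS)%:R =
    mu G * ((if (V <= U)%MS && (\rank V == \rank G)
             then nbases_prefix #|F| h (\rank G) else 0%N)%:R
            / (nbases_prefix #|F| h 0)%:R).
  rewrite -big_distrr /= -(count_bases_mulmx G V rkU) natr_sum big_mkcond.
  rewrite (card_bases_of rkU) -mulrA [_^-1 * _]mulrC; congr (_ * (_ * _)).
  by apply: eq_bigr => X _; rewrite inE; case: ifP.
rewrite /prob_span_eq; under eq_bigr do rewrite prob_given_G.
case sVU: (V <= U)%MS => /=; last by rewrite big1 // => G _; rewrite mul0r mulr0.
rewrite /rank_def_dist big_distrl [RHS]big_mkcond /=; apply: eq_bigr => G _.
rewrite eqn_sub2lE ?rank_leq_row // eq_sym.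
case: eqP => [<-|_]; last by rewrite mul0r mulr0.
by rewrite nbases_prefix_ratio ?card_finNzRing_gt1 ?rank_leq_row.
Qed.
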